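(* Let $(D(E))$ be a matrix convex set, $D(E)\subseteq\mathcal{B}(E)^k$, which is closed with respect to reducing subspaces, and let $F:D(E)\to\mathcal{B}(E)$ be a free function. Then the real hypograph $\mathrm{hypo}_{\mathrm{Re}}(F)$ is a matrix convex set if and only if $F$ is real operator concave.
   Context: $\mathcal{B}(E)$: bounded operators on a Hilbert space $E$; $\Re X=(X+X^* )/2$; $X\geq_{\mathrm{Re}}0$ means $\Re X\geq 0$ (entrywise for tuples); $A\leq_{\mathrm{Re}}B$ means $B-A\geq_{\mathrm{Re}}0$. For a tuple $X$ and a linear map $U$, $U^*XU:=(U^*X_1U,\dots,U^*X_kU)$. A graded collection $C=(C(E))$ with $C(E)\subseteq\mathcal{B}(E)^m$ for all Hilbert spaces $E$ is a free set if $U^*C(E)U\subseteq C(K)$ for every unitary $U:K\to E$ and $C(E)\oplus C(K)\subseteq C(E\oplus K)$; it is matrix convex if moreover $V^*C(E)V\subseteq C(K)$ for every linear isometry $V:K\to E$. $C$ is closed with respect to reducing subspaces if whenever $X\in C(K)$ and $N\subseteq K$ is a closed subspace invariant under all $X_i$ (equivalently, with $X=\hat X\oplus\overline X$ relative to $K=N\oplus N^\perp$, as used here), the tuple of restrictions $\hat X=(X_1|_N,\dots,X_m|_N)$ lies in $C(N)$. A free function $F:D(E)\to\mathcal{B}(E)$ satisfies $F(U^*A_1U,\dots,U^*A_kU)=U^*F(A)U$ for unitaries $U$ and $F(A_1\oplus B_1,\dots,A_k\oplus B_k)=F(A)\oplus F(B)$. It is real operator concave if $(1-\lambda)F(A)+\lambda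 F(B)\leq_{\mathrm{Re}}F((1-\lambda)A+\lambda B)$ for all $E$, $A,B\in D(E)$, $\lambda\in[0,1]$. The real hypograph is the graded collection $\mathrm{hypo}_{\mathrm{Re}}(F)(K)=\{(Y,X)\in\mathcal{B}(K)\times D(K): Y\leq_{\mathrm{Re}}F(X)\}$, viewed as a collection of $(k+1)$-tuples. *)

From Stdlib Require Import Reals.
Require Stdlib.Vectors.Fin.
Open Scope R_scope.

Record Cplx := mkC { re : R ; im : R }.
Definition C0 : Cplx := mkC 0 0.
Definition C1 : Cplx := mkC 1 0.
Definition RtoC (r : R) : Cplx := mkC r 0.
Definition Cadd (a b : Cplx) : Cplx := mkC (re a + re b) (im a + im b).
Definition Cmul (a b : Cplx) : Cplx :=
  mkC (re a * re b - im a * im b) (re a * im b + im a * re b).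
Definition Cconj (a : Cplx) : Cplx := mkC (re a) (- im a).

Record Hilbert := {
  hcar :> Type;
  hzero : hcar;
  hadd : hcar -> hcar -> hcar;
  hopp : hcar -> hcar;
  hscal : Cplx -> hcar -> hcar;
  hinner : hcar -> hcar -> Cplx;
  haddA : forall x y z, hadd x (hadd y z) = hadd (hadd x y) z;
  haddC : forall x y, hadd x y = hadd y x;
  hadd0 : forall x, hadd x hzero = x;
  haddN : forall x, hadd x (hopp x) = hzero;
  hscalA : forall a b x, hscal a (hscal b x) = hscal (Cmul a b) x;
  hscal1 : forall x, hscal C1 x = x;
  hscalDr : forall a x y, hscal a (hadd x y) = hadd (hscal a x) (hscal a y);
  hscalDl : forall a b x, hscal (Cadd a b) x = hadd (hscal a x) (hscal b x);
  hinnerDl : forall x y z, hinner (hadd x y) z = Cadd (hinner x z) (hinner y z);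
  hinnerZl : forall a x y, hinner (hscal a x) y = Cmul a (hinner x y);
  hinner_sym : forall x y, hinner y x = Cconj (hinner x y);
  hinner_pos : forall x, 0 <= re (hinner x x);
  hinner_def : forall x, hinner x x = C0 -> x = hzero;
  hcomplete : forall u : nat -> hcar,
    (forall eps, 0 < eps -> exists N, forall n m, (N <= n)%nat -> (N <= m)%nat ->
        sqrt (re (hinner (hadd (u n) (hopp (u m))) (hadd (u n) (hopp (u m))))) < eps) ->
    exists l, forall eps, 0 < eps -> exists N, forall n, (N <= n)%nat ->
        sqrt (re (hinner (hadd (u n) (hopp l)) (hadd (u n) (hopp l)))) < eps
}.
Arguments hzero {h}.
Arguments hadd {h} _ _.
Arguments hopp {h} _.
Arguments hscal {h} _ _.
Arguments hinner {h} _ _.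

Definition hnorm {E : Hilbert} (x : E) : R := sqrt (re (hinner x x)).

Record BL (E K : Hilbert) := {
  bapp :> E -> K;
  bapp_add : forall x y, bapp (hadd x y) = hadd (bapp x) (bapp y);
  bapp_scal : forall a x, bapp (hscal a x) = hscal a (bapp x);
  bapp_bounded : exists M, forall x, hnorm (bapp x) <= M * hnorm x
}.
Arguments bapp {E K} _ _.

Definition tuple (m : nat) (E : Hilbert) := Fin.t m -> BL E E.

Definition graded (m : nat) := forall E : Hilbert, tuple m E -> Prop.

Definition isometry {K E : Hilbert} (V : BL K E) : Prop :=
  forall x y, hinner (V x) (V y) = hinner x y.
Definition unitary {K E : Hilbert} (U : BL K E) : Prop :=
  isometry U /\ forall y : E, exists x : K, U x = y.

(** T = compression of X by V  (characterised by <T k, k'> = <X V k, V k'>, i.e. the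
    defining property of the adjoint of V) *)
Definition compress {m} {K E : Hilbert} (V : BL K E) (X : tuple m E) (T : tuple m K)
  : Prop :=
  forall l (k k' : K), hinner (T l k) k' = hinner (X l (V k)) (V k').

Definition compress_op {K E : Hilbert} (V : BL K E) (X : BL E E) (T : BL K K) : Prop :=
  forall (k k' : K), hinner (T k) k' = hinner (X (V k)) (V k').

(** G = E ⊕ K via isometric embeddings i, j with orthogonal ranges spanning G *)
Definition is_dsum {E K G : Hilbert} (i : BL E G) (j : BL K G) : Prop :=
  isometry i /\ isometry j /\
  (forall e k, hinner (i e) (j k) = C0) /\
  (forall g : G, exists e k, g = hadd (i e) (j k)).

Definition dsum_op {E K G : Hilbert} (i : BL E G) (j : BL K G)
  (X : BL E E) (Y : BL K K) (T : BL G G) : Prop :=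
  forall e k, T (hadd (i e) (j k)) = hadd (i (X e)) (j (Y k)).

Definition dsum_tuple {m} {E K G : Hilbert} (i : BL E G) (j : BL K G)
  (X : tuple m E) (Y : tuple m K) (T : tuple m G) : Prop :=
  forall l, dsum_op i j (X l) (Y l) (T l).

Definition free_set {m} (C : graded m) : Prop :=
  (forall (E K : Hilbert) (U : BL K E), unitary U ->
     forall X T, C E X -> compress U X T -> C K T) /\
  (forall (E K G : Hilbert) (i : BL E G) (j : BL K G), is_dsum i j ->
     forall X Y T, C E X -> C K Y -> dsum_tuple i j X Y T -> C G T).

Definition matrix_convex {m} (C : graded m) : Prop :=
  free_set C /\
  (forall (E K : Hilbert) (V : BL K E), isometry V ->
     forall X T, C E X -> compress V X T -> C K T).

(** Closedness w.r.t. reducing subspaces: the closed subspace N of K is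
    given as the range of an isometry V : N -> K; it is invariant under all
    X_l, and so is its orthogonal complement (X = X^ ⊕ X-bar); the tuple of
    restrictions X^ must lie in C(N). *)
Definition closed_reducing {m} (C : graded m) : Prop :=
  forall (K N : Hilbert) (V : BL N K), isometry V ->
  forall X, C K X ->
  (forall l (n : N), exists n' : N, X l (V n) = V n') ->
  (forall l (k : K), (forall n : N, hinner k (V n) = C0) ->
       forall n : N, hinner (X l k) (V n) = C0) ->
  forall T : tuple m N, (forall l n, V (T l n) = X l (V n)) -> C N T.

(** Real-part order: A <=_Re B iff Re(B - A) >= 0, i.e.
    <Re(B-A) x, x> = Re <(B-A)x, x> >= 0 for all x. *)
Definition le_Re {E : Hilbert} (A B : BL E E) : Prop :=
  forall x : E, re (hinner (A x) x) <= re (hinner (B x) x).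

(** Free functions on D (only values on D(E) matter) *)
Definition free_function {k} (D : graded k) (F : forall E : Hilbert, tuple k E -> BL E E)
  : Prop :=
  (forall (E K : Hilbert) (U : BL K E), unitary U ->
     forall A T, D E A -> compress U A T -> compress_op U (F E A) (F K T)) /\
  (forall (E K G : Hilbert) (i : BL E G) (j : BL K G), is_dsum i j ->
     forall A B T, D E A -> D K B -> dsum_tuple i j A B T ->
       dsum_op i j (F E A) (F K B) (F G T)).

Definition real_operator_concave {k} (D : graded k)
  (F : forall E : Hilbert, tuple k E -> BL E E) : Prop :=
  forall (E : Hilbert) (A B : tuple k E) (lam : R), 0 <= lam <= 1 ->
  D E A -> D E B ->
  forall T : tuple k E,
    (forall l x, T l x = hadd (hscal (RtoC (1 - lam)) (A l x)) (hscal (RtoC lam) (B l x))) ->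
  forall S : BL E E,
    (forall x, S x = hadd (hscal (RtoC (1 - lam)) (F E A x)) (hscal (RtoC lam) (F E B x))) ->
  le_Re S (F E T).

(** Real hypograph, as a graded collection of (k+1)-tuples (Y, X) *)
Definition hypo_Re {k} (D : graded k) (F : forall E : Hilbert, tuple k E -> BL E E)
  : graded (S k) :=
  fun E Z => D E (fun l => Z (Fin.FS l)) /\ le_Re (Z Fin.F1) (F E (fun l => Z (Fin.FS l))).

(* If hypo_Re F is matrix convex it is convex, since a convex combination (1-λ) A + λ B is
   the compression of A ⊕ B by the isometry x |-> (sqrt(1-λ) x, sqrt λ x); applied to the
   points (F A, A) and (F B, B) this is concavity of F.

   Conversely, hypo_Re F is closed under direct sums because F respects them, and closure
   under a compression T = V* X V by an isometry V reduces to the operator Jensen inequality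
   V* F(X) V <=_Re F(V* X V).  For this, dilate V to the unitary
   U = [[V, 1 - V V*], [0, V*]] : K ⊕ E -> E ⊕ K and put Y = U* (X ⊕ T) U.  Then Y and its
   conjugate R Y R by R = 1 ⊕ (-1) lie in D, and their average is T ⊕ Q, where Q lies in D
   because D is closed with respect to reducing subspaces.  The K-corners of F(Y) and of
   F(R Y R) are both V* F(X) V and that of F(T ⊕ Q) = F(T) ⊕ F(Q) is F(T), so concavity of F
   gives the inequality.

   The adjoint of the isometry V is obtained from the orthogonal projection onto its range:
   a minimising sequence for the distance is Cauchy by the parallelogram law, and its limit
   is a minimiser with orthogonal residual. *)

From Pilot Require Import Defs.
From Stdlib Require Import Reals Lra Psatz Lia ClassicalEpsilon Classical.
Open Scope R_scope.

Lemma Cplx_eq (a b : Cplx) : re a = re b -> im a = im b -> a = b.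
Proof. destruct a, b; simpl; intros; subst; reflexivity. Qed.

Section InnerProduct.
Context {E : Hilbert}.

Lemma hinner_0l (y : E) : hinner hzero y = C0.
Proof.
  pose proof (hinnerDl E hzero hzero y) as H. rewrite hadd0 in H.
  destruct (hinner hzero y) as [a b]. injection H; intros; apply Cplx_eq; simpl; lra.
Qed.

Lemma hinner_oppl (x y : E) :
  hinner (hopp x) y = mkC (- re (hinner x y)) (- im (hinner x y)).
Proof.
  pose proof (hinnerDl E x (hopp x) y) as H. rewrite haddN, hinner_0l in H.
  destruct (hinner (hopp x) y) as [a b], (hinner x y) as [c d].
  injection H; intros; apply Cplx_eq; simpl; lra.
Qed.

Lemma hinner_addr (x y z : E) : hinner x (hadd y z) = Cadd (hinner x y) (hinner x z).
Proof.
  rewrite (hinner_sym _ (hadd y z)), hinnerDl, (hinner_sym _ x y), (hinner_sym _ x z).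
  destruct (hinner y x), (hinner z x); apply Cplx_eq; simpl; lra.
Qed.

Lemma hinner_scalr (c : Cplx) (x y : E) :
  hinner x (hscal c y) = Cmul (Cconj c) (hinner x y).
Proof.
  rewrite (hinner_sym _ (hscal c y)), hinnerZl, (hinner_sym _ x y).
  destruct c, (hinner y x); apply Cplx_eq; simpl; ring.
Qed.

Lemma hinner_oppr (x y : E) :
  hinner x (hopp y) = mkC (- re (hinner x y)) (- im (hinner x y)).
Proof.
  rewrite (hinner_sym _ (hopp y)), hinner_oppl, (hinner_sym _ x y).
  destruct (hinner y x); apply Cplx_eq; simpl; ring.
Qed.

Lemma hinner_0r (y : E) : hinner y hzero = C0.
Proof. rewrite (hinner_sym _ hzero), hinner_0l; apply Cplx_eq; simpl; ring. Qed.

Lemma im_hinner_self (x : E) : im (hinner x x) = 0.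
Proof.
  pose proof (hinner_sym E x x) as H. destruct (hinner x x) as [a b].
  injection H; simpl; lra.
Qed.

Lemma re_hinner_sym (x y : E) : re (hinner y x) = re (hinner x y).
Proof. rewrite hinner_sym; reflexivity. Qed.

Lemma hinner_ext (x y : E) : (forall z, hinner x z = hinner y z) -> x = y.
Proof.
  intros H. set (z := hadd x (hopp y)).
  assert (Hz : hinner z z = C0).
  { unfold z at 1. rewrite hinnerDl, hinner_oppl, H. apply Cplx_eq; simpl; lra. }
  apply hinner_def in Hz. unfold z in Hz.
  rewrite <- (hadd0 E x), <- (haddN E y), (haddC E y), haddA, Hz, haddC, hadd0.
  reflexivity.
Qed.

End InnerProduct.

Ltac inner_simpl := repeat first
  [ rewrite hinnerDl | rewrite hinnerZl | rewrite hinner_oppl | rewrite hinner_0l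
  | rewrite hinner_addr | rewrite hinner_scalr | rewrite hinner_oppr | rewrite hinner_0r ].

Ltac vec_eq :=
  apply hinner_ext; intro; inner_simpl; apply Cplx_eq; simpl; first [ring | field].

Lemma bapp0 {E K : Hilbert} (f : BL E K) : f hzero = hzero.
Proof.
  apply hinner_ext; intro z.
  pose proof (f_equal (fun v => hinner v z) (bapp_add E K f hzero hzero)) as H.
  simpl in H. rewrite hadd0, hinnerDl in H. rewrite hinner_0l.
  destruct (hinner (f hzero) z) as [a b]. injection H; intros; apply Cplx_eq; simpl; lra.
Qed.

Lemma bappN {E K : Hilbert} (f : BL E K) (x : E) : f (hopp x) = hopp (f x).
Proof.
  apply hinner_ext; intro z.
  assert (H : hadd (f (hopp x)) (f x) = hzero).
  { rewrite <- bapp_add, haddC, haddN. apply bapp0. }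
  apply (f_equal (fun v => hinner v z)) in H.
  rewrite hinnerDl, hinner_0l in H. rewrite hinner_oppl.
  destruct (hinner (f (hopp x)) z) as [a b], (hinner (f x) z) as [c d].
  injection H; intros; apply Cplx_eq; simpl; lra.
Qed.

Ltac op_simpl :=
  repeat first [rewrite bapp_add | rewrite bapp_scal | rewrite bappN | rewrite bapp0].

Definition hnorm2 {E : Hilbert} (x : E) := re (hinner x x).

Section SquaredNorm.
Context {E : Hilbert}.

Lemma hnorm2_ge0 (x : E) : 0 <= hnorm2 x.
Proof. apply hinner_pos. Qed.

Lemma hnorm2_scal (c : Cplx) (x : E) :
  hnorm2 (hscal c x) = (re c * re c + im c * im c) * hnorm2 x.
Proof.
  unfold hnorm2. rewrite hinnerZl, hinner_scalr. pose proof (im_hinner_self x).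
  destruct c; simpl; nra.
Qed.

Lemma hnorm2_add (x y : E) : hnorm2 (hadd x y) = hnorm2 x + hnorm2 y + 2 * re (hinner x y).
Proof. unfold hnorm2. rewrite hinnerDl, !hinner_addr; simpl. rewrite (re_hinner_sym x y). ring. Qed.

Lemma hnorm2_add_scal (x y : E) (r : R) :
  hnorm2 (hadd x (hscal (RtoC r) y)) = hnorm2 x + 2 * r * re (hinner x y) + r * r * hnorm2 y.
Proof. rewrite hnorm2_add, hnorm2_scal, hinner_scalr; simpl; ring. Qed.

Lemma hnorm2_add_le (x y : E) : hnorm2 (hadd x y) <= 2 * hnorm2 x + 2 * hnorm2 y.
Proof.
  pose proof (hnorm2_add_scal x y (-1)). pose proof (hnorm2_ge0 (hadd x (hscal (RtoC (-1)) y))).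
  rewrite hnorm2_add; lra.
Qed.

(* Peter-Paul: 2 Re <x, y> <= t |x|^2 + |y|^2 / t. *)
Lemma hnorm2_add_le_weighted (x y : E) (t : R) : 0 < t ->
  hnorm2 (hadd x y) <= (1 + t) * hnorm2 x + (1 + / t) * hnorm2 y.
Proof.
  intros Ht. pose proof (hnorm2_ge0 (hadd (hscal (RtoC t) x) (hscal (RtoC (-1)) y))) as H.
  rewrite hnorm2_add_scal, hnorm2_scal, hinnerZl in H; simpl in H. rewrite hnorm2_add.
  assert (2 * re (hinner x y) <= t * hnorm2 x + / t * hnorm2 y); [|lra].
  apply Rmult_le_reg_l with t; [exact Ht|].
  replace (t * (t * hnorm2 x + / t * hnorm2 y)) with (t * t * hnorm2 x + hnorm2 y)
    by (field; lra).
  nra.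
Qed.

Lemma parallelogram_law (x y : E) :
  hnorm2 (hadd x y) + hnorm2 (hadd x (hopp y)) = 2 * hnorm2 x + 2 * hnorm2 y.
Proof.
  rewrite !hnorm2_add. unfold hnorm2. rewrite hinner_oppr, !hinner_oppl, hinner_oppr; simpl.
  ring.
Qed.

End SquaredNorm.

Lemma sqrt_add_le (a b : R) : 0 <= a -> 0 <= b -> sqrt (a + b) <= sqrt a + sqrt b.
Proof.
  intros Ha Hb. pose proof (sqrt_pos a). pose proof (sqrt_pos b).
  rewrite <- (sqrt_square (sqrt a + sqrt b)) by lra. apply sqrt_le_1_alt.
  rewrite <- (sqrt_sqrt a) at 1 by lra. rewrite <- (sqrt_sqrt b) at 1 by lra. nra.
Qed.

Section DirectSum.
Variables E K : Hilbert.

Definition dsum_zero : E * K := (hzero, hzero).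
Definition dsum_add (p q : E * K) : E * K := (hadd (fst p) (fst q), hadd (snd p) (snd q)).
Definition dsum_opp (p : E * K) : E * K := (hopp (fst p), hopp (snd p)).
Definition dsum_scal c (p : E * K) : E * K := (hscal c (fst p), hscal c (snd p)).
Definition dsum_inner (p q : E * K) : Cplx :=
  Cadd (hinner (fst p) (fst q)) (hinner (snd p) (snd q)).

Lemma dsum_addA x y z : dsum_add x (dsum_add y z) = dsum_add (dsum_add x y) z.
Proof. unfold dsum_add; simpl; rewrite !haddA; reflexivity. Qed.
Lemma dsum_addC x y : dsum_add x y = dsum_add y x.
Proof. unfold dsum_add; rewrite (haddC E (fst x)), (haddC K (snd x)); reflexivity. Qed.
Lemma dsum_add0 x : dsum_add x dsum_zero = x.
Proof. destruct x; unfold dsum_add; simpl; rewrite !hadd0; reflexivity. Qed.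
Lemma dsum_addN x : dsum_add x (dsum_opp x) = dsum_zero.
Proof. unfold dsum_add; simpl; rewrite !haddN; reflexivity. Qed.
Lemma dsum_scalA a b x : dsum_scal a (dsum_scal b x) = dsum_scal (Cmul a b) x.
Proof. unfold dsum_scal; simpl; rewrite !hscalA; reflexivity. Qed.
Lemma dsum_scal1 x : dsum_scal Defs.C1 x = x.
Proof. destruct x; unfold dsum_scal; simpl; rewrite !hscal1; reflexivity. Qed.
Lemma dsum_scalDr a x y : dsum_scal a (dsum_add x y) = dsum_add (dsum_scal a x) (dsum_scal a y).
Proof. unfold dsum_scal, dsum_add; simpl; rewrite !hscalDr; reflexivity. Qed.
Lemma dsum_scalDl a b x : dsum_scal (Cadd a b) x = dsum_add (dsum_scal a x) (dsum_scal b x).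
Proof. unfold dsum_scal, dsum_add; simpl; rewrite !hscalDl; reflexivity. Qed.
Lemma dsum_innerDl x y z : dsum_inner (dsum_add x y) z = Cadd (dsum_inner x z) (dsum_inner y z).
Proof. unfold dsum_inner, dsum_add; simpl; rewrite !hinnerDl; apply Cplx_eq; simpl; ring. Qed.
Lemma dsum_innerZl a x y : dsum_inner (dsum_scal a x) y = Cmul a (dsum_inner x y).
Proof. unfold dsum_inner, dsum_scal; simpl; rewrite !hinnerZl; apply Cplx_eq; simpl; ring. Qed.
Lemma dsum_inner_sym x y : dsum_inner y x = Cconj (dsum_inner x y).
Proof.
  unfold dsum_inner; rewrite (hinner_sym E (fst x)), (hinner_sym K (snd x)).
  apply Cplx_eq; simpl; ring.
Qed.
Lemma dsum_inner_pos x : 0 <= re (dsum_inner x x).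
Proof.
  unfold dsum_inner; simpl. pose proof (hinner_pos E (fst x)). pose proof (hinner_pos K (snd x)).
  lra.
Qed.
Lemma dsum_inner_def x : dsum_inner x x = C0 -> x = dsum_zero.
Proof.
  destruct x as [a b]; unfold dsum_inner; simpl; intros H.
  pose proof (hinner_pos E a). pose proof (hinner_pos K b).
  pose proof (im_hinner_self a). pose proof (im_hinner_self b).
  apply (f_equal re) in H; simpl in H.
  unfold dsum_zero; f_equal; apply hinner_def; apply Cplx_eq; simpl; lra.
Qed.

Lemma dsum_complete : forall u : nat -> E * K,
  (forall eps, 0 < eps -> exists N, forall n m, (N <= n)%nat -> (N <= m)%nat ->
     sqrt (re (dsum_inner (dsum_add (u n) (dsum_opp (u m)))
                          (dsum_add (u n) (dsum_opp (u m))))) < eps) ->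
  exists l, forall eps, 0 < eps -> exists N, forall n, (N <= n)%nat ->
     sqrt (re (dsum_inner (dsum_add (u n) (dsum_opp l)) (dsum_add (u n) (dsum_opp l)))) < eps.
Proof.
  intros u Hc. unfold dsum_inner, dsum_add, dsum_opp in *; simpl in *.
  destruct (hcomplete E (fun n => fst (u n))) as [l1 Hl1].
  { intros eps He. destruct (Hc eps He) as [N HN]. exists N. intros n m Hn Hm.
    eapply Rle_lt_trans; [|exact (HN n m Hn Hm)]. apply sqrt_le_1_alt.
    pose proof (hinner_pos K (hadd (snd (u n)) (hopp (snd (u m))))). lra. }
  destruct (hcomplete K (fun n => snd (u n))) as [l2 Hl2].
  { intros eps He. destruct (Hc eps He) as [N HN]. exists N. intros n m Hn Hm.
    eapply Rle_lt_trans; [|exact (HN n m Hn Hm)]. apply sqrt_le_1_alt.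
    pose proof (hinner_pos E (hadd (fst (u n)) (hopp (fst (u m))))). lra. }
  exists (l1, l2). intros eps He.
  destruct (Hl1 (eps / 2)) as [N1 HN1]; [lra|]. destruct (Hl2 (eps / 2)) as [N2 HN2]; [lra|].
  exists (Nat.max N1 N2). intros n Hn.
  specialize (HN1 n ltac:(lia)). specialize (HN2 n ltac:(lia)); simpl.
  eapply Rle_lt_trans; [apply sqrt_add_le; apply hinner_pos | lra].
Qed.

Definition dsumH : Hilbert :=
  Build_Hilbert (E * K) dsum_zero dsum_add dsum_opp dsum_scal dsum_inner
    dsum_addA dsum_addC dsum_add0 dsum_addN dsum_scalA dsum_scal1 dsum_scalDr dsum_scalDl
    dsum_innerDl dsum_innerZl dsum_inner_sym dsum_inner_pos dsum_inner_def dsum_complete.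

End DirectSum.

Ltac dsum_simpl :=
  simpl; unfold dsum_inner, dsum_add, dsum_scal, dsum_opp, dsum_zero; simpl.
Lemma bounded_of_hnorm2 {E K : Hilbert} (f : E -> K) (M : R) : 0 <= M ->
  (forall x, hnorm2 (f x) <= M * hnorm2 x) -> exists M', forall x, hnorm (f x) <= M' * hnorm x.
Proof.
  intros HM H. exists (sqrt M). intros x. unfold hnorm.
  rewrite <- sqrt_mult by (auto; apply hnorm2_ge0). apply sqrt_le_1_alt, H.
Qed.

Lemma bapp_bounded2 {E K : Hilbert} (f : BL E K) :
  exists M, 0 <= M /\ forall x, hnorm2 (f x) <= M * hnorm2 x.
Proof.
  destruct (bapp_bounded E K f) as [M0 H]. set (M := Rmax M0 0).
  assert (HM : 0 <= M) by apply Rmax_r.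
  exists (M * M). split; [nra|]. intros x. specialize (H x). unfold hnorm in H.
  assert (Hs : hnorm (f x) <= M * hnorm x).
  { eapply Rle_trans; [exact H|]. apply Rmult_le_compat_r; [apply sqrt_pos | apply Rmax_l]. }
  unfold hnorm in Hs. pose proof (sqrt_pos (hnorm2 x)). pose proof (sqrt_pos (hnorm2 (f x))).
  pose proof (sqrt_sqrt _ (hnorm2_ge0 (f x))). pose proof (sqrt_sqrt _ (hnorm2_ge0 x)).
  unfold hnorm2 in *. nra.
Qed.

Lemma hscal_zero {E : Hilbert} (c : Cplx) : hscal c (@hzero E) = hzero.
Proof. vec_eq. Qed.

Definition id_op (E : Hilbert) : BL E E.
Proof.
  refine (Build_BL E E (fun x => x) _ _ _); try reflexivity.
  apply (bounded_of_hnorm2 _ 1); intros; lra.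
Defined.

Definition zero_op (E K : Hilbert) : BL E K.
Proof.
  refine (Build_BL E K (fun _ => hzero) _ _ _).
  - intros; symmetry; apply hadd0.
  - intros; symmetry; apply hscal_zero.
  - apply (bounded_of_hnorm2 _ 0); [lra|]. intros; unfold hnorm2; rewrite hinner_0l; simpl; lra.
Defined.

Definition opp_op (E : Hilbert) : BL E E.
Proof.
  refine (Build_BL E E (fun x => hopp x) _ _ _); intros; try vec_eq.
  apply (bounded_of_hnorm2 _ 1); [lra|].
  intros; unfold hnorm2; rewrite hinner_oppl, hinner_oppr; simpl; lra.
Defined.

Definition comp_op {E K G : Hilbert} (g : BL K G) (f : BL E K) : BL E G.
Proof.
  refine (Build_BL E G (fun x => g (f x)) _ _ _); intros; op_simpl; try reflexivity.
  destruct (bapp_bounded2 g) as [Mg [Hg0 Hg]], (bapp_bounded2 f) as [Mf [Hf0 Hf]].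
  apply (bounded_of_hnorm2 _ (Mg * Mf)); [nra|]. intros x.
  eapply Rle_trans; [apply Hg|]. specialize (Hf x). nra.
Defined.

Definition lincomb_op {E K : Hilbert} (a : R) (A : BL E K) (b : R) (B : BL E K) : BL E K.
Proof.
  refine (Build_BL E K (fun x => hadd (hscal (RtoC a) (A x)) (hscal (RtoC b) (B x))) _ _ _);
    intros; op_simpl; try vec_eq.
  destruct (bapp_bounded2 A) as [MA [HA0 HA]], (bapp_bounded2 B) as [MB [HB0 HB]].
  apply (bounded_of_hnorm2 _ (2 * (a * a) * MA + 2 * (b * b) * MB)); [nra|]. intros x.
  eapply Rle_trans; [apply hnorm2_add_le|]. rewrite !hnorm2_scal; simpl.
  specialize (HA x). specialize (HB x). pose proof (hnorm2_ge0 x). nra.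
Defined.

Lemma hnorm2_pair {E K : Hilbert} (p : dsumH E K) : hnorm2 p = hnorm2 (fst p) + hnorm2 (snd p).
Proof. reflexivity. Qed.

Definition inl_op (E K : Hilbert) : BL E (dsumH E K).
Proof.
  refine (Build_BL E (dsumH E K) (fun e => (e, hzero)) _ _ _); intros; dsum_simpl.
  - rewrite hadd0; reflexivity.
  - rewrite hscal_zero; reflexivity.
  - apply (bounded_of_hnorm2 _ 1); [lra|]. intros x; rewrite hnorm2_pair; simpl.
    unfold hnorm2 at 2; rewrite hinner_0l; simpl; lra.
Defined.

Definition inr_op (E K : Hilbert) : BL K (dsumH E K).
Proof.
  refine (Build_BL K (dsumH E K) (fun k => (hzero, k)) _ _ _); intros; dsum_simpl.
  - rewrite hadd0; reflexivity.
  - rewrite hscal_zero; reflexivity.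
  - apply (bounded_of_hnorm2 _ 1); [lra|]. intros x; rewrite hnorm2_pair; simpl.
    unfold hnorm2 at 1; rewrite hinner_0l; simpl; lra.
Defined.

Definition snd_op (E K : Hilbert) : BL (dsumH E K) K.
Proof.
  refine (Build_BL (dsumH E K) K (fun p => snd p) _ _ _); try reflexivity.
  apply (bounded_of_hnorm2 _ 1); [lra|]. intros [a b]. rewrite hnorm2_pair; simpl.
  pose proof (hnorm2_ge0 a). lra.
Defined.

Definition block_op {E1 K1 E2 K2 : Hilbert}
  (A : BL E1 E2) (B : BL K1 E2) (C : BL E1 K2) (D : BL K1 K2) : BL (dsumH E1 K1) (dsumH E2 K2).
Proof.
  refine (Build_BL (dsumH E1 K1) (dsumH E2 K2)
    (fun p => (hadd (A (fst p)) (B (snd p)), hadd (C (fst p)) (D (snd p)))) _ _ _).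
  - intros [a b] [c d]; dsum_simpl; op_simpl; f_equal; vec_eq.
  - intros z [a b]; dsum_simpl; op_simpl; f_equal; vec_eq.
  - destruct (bapp_bounded2 A) as [MA [HA0 HA]], (bapp_bounded2 B) as [MB [HB0 HB]],
      (bapp_bounded2 C) as [MC [HC0 HC]], (bapp_bounded2 D) as [MD [HD0 HD]].
    apply (bounded_of_hnorm2 _ (2 * (MA + MB + MC + MD))); [nra|]. intros [a b].
    rewrite !hnorm2_pair; simpl.
    pose proof (hnorm2_add_le (A a) (B b)). pose proof (hnorm2_add_le (C a) (D b)).
    specialize (HA a). specialize (HB b). specialize (HC a). specialize (HD b).
    pose proof (hnorm2_ge0 a). pose proof (hnorm2_ge0 b). nra.
Defined.

Definition diag_op {E K : Hilbert} (A : BL E E) (B : BL K K) : BL (dsumH E K) (dsumH E K) :=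
  block_op A (zero_op K E) (zero_op E K) B.

Definition split_op (E : Hilbert) (a b : R) : BL E (dsumH E E).
Proof.
  refine (Build_BL E (dsumH E E) (fun x => (hscal (RtoC a) x, hscal (RtoC b) x)) _ _ _);
    intros; dsum_simpl.
  - rewrite !hscalDr; reflexivity.
  - f_equal; vec_eq.
  - apply (bounded_of_hnorm2 _ (a * a + b * b)); [nra|]. intros x.
    rewrite hnorm2_pair; simpl. rewrite !hnorm2_scal; simpl; lra.
Defined.

Lemma is_dsum_pair (E K : Hilbert) : is_dsum (inl_op E K) (inr_op E K).
Proof.
  split; [|split; [|split]].
  - intros x y; dsum_simpl. rewrite hinner_0l; apply Cplx_eq; simpl; ring.
  - intros x y; dsum_simpl. rewrite hinner_0l; apply Cplx_eq; simpl; ring.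
  - intros e k; dsum_simpl. rewrite hinner_0l, hinner_0r; apply Cplx_eq; simpl; ring.
  - intros [e k]. exists e, k; dsum_simpl. rewrite hadd0, haddC, hadd0; reflexivity.
Qed.

Lemma dsum_op_diag {E K : Hilbert} (A : BL E E) (B : BL K K) :
  dsum_op (inl_op E K) (inr_op E K) A B (diag_op A B).
Proof. intros e k; dsum_simpl; op_simpl. f_equal; vec_eq. Qed.

Lemma hinner_is_dsum {E K G : Hilbert} (i : BL E G) (j : BL K G) : is_dsum i j ->
  forall a b e k, hinner (hadd (i a) (j b)) (hadd (i e) (j k)) = Cadd (hinner a e) (hinner b k).
Proof.
  intros (Hi & Hj & Ho & _) a b e k.
  rewrite hinnerDl, !hinner_addr, Hi, Hj, Ho, (hinner_sym _ (i e) (j b)), Ho.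
  apply Cplx_eq; simpl; ring.
Qed.

Lemma dsum_op_inl_inner {E K : Hilbert} (A : BL E E) (B : BL K K) (T : BL (dsumH E K) (dsumH E K)) :
  dsum_op (inl_op E K) (inr_op E K) A B T ->
  forall a, hinner (T ((a, hzero) : dsumH E K)) ((a, hzero) : dsumH E K) = hinner (A a) a.
Proof.
  intros H a. pose proof (hinner_is_dsum _ _ (is_dsum_pair E K) (A a) (B hzero) a hzero) as Hi.
  rewrite <- H in Hi. simpl in Hi. unfold dsum_add in Hi; simpl in Hi.
  rewrite !hadd0, hinner_0r in Hi. simpl. unfold dsum_inner in *. rewrite Hi.
  apply Cplx_eq; simpl; ring.
Qed.

Lemma nonneg_quadratic_linear_coeff (b c : R) :
  0 <= c -> (forall s, 0 <= - 2 * s * b + s * s * c) -> b = 0.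
Proof.
  intros Hc H. specialize (H (b / (c + 1))).
  replace (- 2 * (b / (c + 1)) * b + b / (c + 1) * (b / (c + 1)) * c)
    with (- (b * b) * (c + 2) / ((c + 1) * (c + 1))) in H by (field; lra).
  assert (0 <= - (b * b) * (c + 2)); [|nra].
  apply Rmult_le_reg_r with (/ ((c + 1) * (c + 1))); [apply Rinv_0_lt_compat; nra|].
  rewrite Rmult_0_l. exact H.
Qed.

Lemma inv_INR_small (eps : R) : 0 < eps ->
  exists N : nat, forall n, (N <= n)%nat -> / (INR n + 1) < eps.
Proof.
  intros He. destruct (INR_unbounded (/ eps)) as [N HN]. exists N. intros n Hn.
  apply le_INR in Hn. rewrite <- (Rinv_inv eps). apply Rinv_lt_contravar; [|lra].
  apply Rmult_lt_0_compat; [apply Rinv_0_lt_compat; lra | pose proof (pos_INR n); lra].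
Qed.

Lemma sqrt_lt_of_lt_square (x eps : R) : 0 <= x -> 0 < eps -> x < eps * eps -> sqrt x < eps.
Proof. intros. rewrite <- (sqrt_square eps) by lra. apply sqrt_lt_1_alt; lra. Qed.

Section Projection.
Variables (K E : Hilbert) (V : BL K E).
Hypothesis HV : isometry V.
Variable e : E.

Lemma hnorm2_isometry (x : K) : hnorm2 (V x) = hnorm2 x.
Proof. unfold hnorm2; rewrite HV; reflexivity. Qed.

Definition dist2 (k : K) := hnorm2 (hadd e (hopp (V k))).

Lemma dist2_inf : exists d, 0 <= d /\
  (forall k, d <= dist2 k) /\ (forall eps, 0 < eps -> exists k, dist2 k < d + eps).
Proof.
  set (S := fun r => exists k, r = - dist2 k).
  destruct (completeness S) as [m [Hub Hlub]].
  - exists 0. intros r [k ->]. pose proof (hnorm2_ge0 (hadd e (hopp (V k)))). unfold dist2; lra.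
  - exists (- dist2 hzero), hzero. reflexivity.
  - exists (- m). split; [|split].
    + assert (m <= 0); [|lra]. apply Hlub. intros r [k ->].
      pose proof (hnorm2_ge0 (hadd e (hopp (V k)))). unfold dist2; lra.
    + intros k. assert (- dist2 k <= m) by (apply Hub; exists k; reflexivity). lra.
    + intros eps He. apply NNPP. intros Hn.
      assert (m <= m - eps); [|lra].
      apply Hlub. intros r [k ->].
      assert (~ dist2 k < - m + eps) by (intro; apply Hn; eauto). lra.
Qed.

(* Parallelogram law at e - V k1, e - V k2, whose half-sum is e - V((k1+k2)/2). *)
Lemma dist2_diff_bound (d : R) : (forall k, d <= dist2 k) ->
  forall k1 k2, hnorm2 (hadd k1 (hopp k2)) <= 2 * (dist2 k1 - d) + 2 * (dist2 k2 - d).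
Proof.
  intros Hd k1 k2.
  set (a := hadd e (hopp (V k1))). set (b := hadd e (hopp (V k2))).
  pose proof (parallelogram_law b a) as Hp.
  assert (Emid : hadd b a = hscal (RtoC 2) (hadd e (hopp (V (hscal (RtoC (/ 2)) (hadd k1 k2))))))
    by (unfold a, b; op_simpl; vec_eq).
  assert (Ediff : hadd b (hopp a) = V (hadd k1 (hopp k2))) by (unfold a, b; op_simpl; vec_eq).
  rewrite Emid, Ediff, hnorm2_scal, hnorm2_isometry in Hp; simpl in Hp.
  pose proof (Hd (hscal (RtoC (/ 2)) (hadd k1 k2))). unfold dist2 in *. fold a b. lra.
Qed.

(* Peter-Paul splitting of e - V l through e - V k, with weight t. *)
Lemma dist2_le_of_approx (l : K) (d : R) : 0 <= d ->
  (forall t, 0 < t -> exists k, dist2 k < d + t /\ hnorm2 (hadd k (hopp l)) < t * t) ->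
  dist2 l <= d.
Proof.
  intros Hd0 Happrox. apply le_epsilon. intros eps He.
  set (t := Rmin 1 (eps / (d + 4))).
  assert (Ht : 0 < t <= 1).
  { split; [apply Rmin_glb_lt; [lra | apply Rdiv_lt_0_compat; lra] | apply Rmin_l]. }
  assert (Hteps : t * (d + 4) <= eps).
  { apply Rle_trans with (eps / (d + 4) * (d + 4)).
    - apply Rmult_le_compat_r; [lra | apply Rmin_r].
    - right; field; lra. }
  destruct (Happrox t (proj1 Ht)) as [k [Hk Hclose]].
  assert (Esplit : hadd e (hopp (V l)) = hadd (hadd e (hopp (V k))) (V (hadd k (hopp l))))
    by (op_simpl; vec_eq).
  pose proof (hnorm2_add_le_weighted (hadd e (hopp (V k))) (V (hadd k (hopp l))) t (proj1 Ht))
    as Hw.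
  rewrite <- Esplit, hnorm2_isometry in Hw. unfold dist2 in *.
  assert (Hb : (1 + / t) * hnorm2 (hadd k (hopp l)) <= (1 + / t) * (t * t))
    by (apply Rmult_le_compat_l; [pose proof (Rinv_0_lt_compat t (proj1 Ht)) |]; lra).
  replace ((1 + / t) * (t * t)) with (t + t * t) in Hb by (field; lra).
  assert (Ha : (1 + t) * hnorm2 (hadd e (hopp (V k))) <= (1 + t) * (d + t))
    by (apply Rmult_le_compat_l; lra).
  nra.
Qed.

Lemma dist2_min_attained : exists l, forall k, dist2 l <= dist2 k.
Proof.
  destruct dist2_inf as [d [Hd0 [Hd Happrox]]].
  assert (Hseq : forall n : nat, exists k, dist2 k < d + / (INR n + 1)).
  { intros n. apply Happrox, Rinv_0_lt_compat. pose proof (pos_INR n). lra. }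
  set (ks := fun n => proj1_sig (constructive_indefinite_description _ (Hseq n))).
  assert (Hks : forall n, dist2 (ks n) < d + / (INR n + 1)).
  { intros n. unfold ks. destruct (constructive_indefinite_description _ _); assumption. }
  destruct (hcomplete K ks) as [l Hl].
  { intros eps He. destruct (inv_INR_small (eps * eps / 4)) as [N HN]; [nra|].
    exists N. intros n m Hn Hm. apply sqrt_lt_of_lt_square; [apply hnorm2_ge0 | exact He |].
    pose proof (dist2_diff_bound d Hd (ks n) (ks m)). pose proof (Hks n). pose proof (Hks m).
    pose proof (HN n Hn). pose proof (HN m Hm). unfold hnorm2 in *. lra. }
  exists l. intros k. apply Rle_trans with d; [|apply Hd].
  apply dist2_le_of_approx; [exact Hd0|]. intros t Ht.
  destruct (inv_INR_small t Ht) as [N1 HN1]. destruct (Hl t Ht) as [N2 HN2].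
  set (n := Nat.max N1 N2). specialize (HN1 n ltac:(lia)). specialize (HN2 n ltac:(lia)).
  exists (ks n). split.
  - pose proof (Hks n). lra.
  - apply sqrt_lt_0_alt. rewrite sqrt_square by lra. exact HN2.
Qed.

Lemma dist2_min_orthogonal (l : K) : (forall k, dist2 l <= dist2 k) ->
  forall k, hinner (hadd e (hopp (V l))) (V k) = C0.
Proof.
  intros Hmin. set (w := hadd e (hopp (V l))).
  assert (Hre : forall k, re (hinner w (V k)) = 0).
  { intros k. apply (nonneg_quadratic_linear_coeff _ (hnorm2 (V k))); [apply hnorm2_ge0|].
    intros s. pose proof (Hmin (hadd l (hscal (RtoC s) k))) as Hs. unfold dist2 in Hs.
    replace (hadd e (hopp (V (hadd l (hscal (RtoC s) k)))))
      with (hadd w (hscal (RtoC (- s)) (V k))) in Hs by (unfold w; op_simpl; vec_eq).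
    rewrite hnorm2_add_scal in Hs. fold w in Hs. unfold dist2 in Hs. lra. }
  intros k. pose proof (Hre (hscal (mkC 0 1) k)) as Him.
  rewrite bapp_scal, hinner_scalr in Him; simpl in Him.
  apply Cplx_eq; simpl; [apply Hre | lra].
Qed.

Lemma isometry_adjoint_exists : exists l : K, forall k, hinner l k = hinner e (V k).
Proof.
  destruct dist2_min_attained as [l Hl]. exists l. intros k.
  pose proof (dist2_min_orthogonal l Hl k) as Ho.
  replace e with (hadd (hadd e (hopp (V l))) (V l)) at 1 by vec_eq.
  rewrite hinnerDl, Ho, HV. apply Cplx_eq; simpl; ring.
Qed.

End Projection.

Lemma isometry_adjoint_sig {K E : Hilbert} (V : BL K E) (HV : isometry V) :
  {A : BL E K | forall e k, hinner (A e) k = hinner e (V k)}.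
Proof.
  set (f := fun e =>
    proj1_sig (constructive_indefinite_description _ (isometry_adjoint_exists K E V HV e))).
  assert (Hf : forall e k, hinner (f e) k = hinner e (V k)).
  { intros e k. unfold f. destruct (constructive_indefinite_description _ _); auto. }
  unshelve refine (exist _ (Build_BL E K f _ _ _) Hf).
  - intros x y. apply hinner_ext; intro z. rewrite hinnerDl, !Hf, hinnerDl. reflexivity.
  - intros a x. apply hinner_ext; intro z. rewrite hinnerZl, !Hf, hinnerZl. reflexivity.
  - apply (bounded_of_hnorm2 _ 1); [lra|]. intros e.
    pose proof (hnorm2_ge0 (hadd e (hopp (V (f e))))) as H.
    rewrite hnorm2_add in H. unfold hnorm2 in *.
    rewrite hinner_oppl, !hinner_oppr, HV, Hf in H. rewrite Hf. simpl in H. lra.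
Qed.

Definition adjoint {K E : Hilbert} (V : BL K E) (HV : isometry V) : BL E K :=
  proj1_sig (isometry_adjoint_sig V HV).

Lemma adjoint_spec {K E : Hilbert} (V : BL K E) (HV : isometry V) e k :
  hinner (adjoint V HV e) k = hinner e (V k).
Proof. exact (proj2_sig (isometry_adjoint_sig V HV) e k). Qed.

Section AdjointIsometry.
Variables (K E : Hilbert) (V : BL K E).
Hypothesis HV : isometry V.
Local Notation Vs := (adjoint V HV).

Lemma adjoint_isometry_cancel k : Vs (V k) = k.
Proof. apply hinner_ext; intro z. rewrite adjoint_spec, HV. reflexivity. Qed.

Lemma hinner_adjoint_r x y : hinner x (Vs y) = hinner (V x) y.
Proof. rewrite (hinner_sym _ (Vs y)), adjoint_spec, <- hinner_sym. reflexivity. Qed.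

Lemma hinner_range_proj_sym e x : hinner (V (Vs e)) x = hinner e (V (Vs x)).
Proof. rewrite <- hinner_adjoint_r, adjoint_spec. reflexivity. Qed.

End AdjointIsometry.

Ltac adj_simpl V HV := repeat first [progress inner_simpl | rewrite HV
  | rewrite (hinner_range_proj_sym _ _ V HV) | rewrite (hinner_adjoint_r _ _ V HV)
  | rewrite (adjoint_spec V HV)].

Section Dilation.
Variables (K E : Hilbert) (V : BL K E).
Hypothesis HV : isometry V.
Local Notation Vs := (adjoint V HV).

Definition range_compl_proj : BL E E := lincomb_op 1 (id_op E) (-1) (comp_op V Vs).

(* Halmos' unitary dilation [[V, 1 - V V*], [0, V*]] : K ⊕ E -> E ⊕ K. *)
Definition dilation : BL (dsumH K E) (dsumH E K) := block_op V range_compl_proj (zero_op K K) Vs.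
Definition dilation_inv : BL (dsumH E K) (dsumH K E) :=
  block_op Vs (zero_op K K) range_compl_proj V.

Lemma dilation_isometry : isometry dilation.
Proof. intros [k e] [k' e']. dsum_simpl. op_simpl. adj_simpl V HV. apply Cplx_eq; simpl; ring. Qed.

Lemma dilation_right_inv g : dilation (dilation_inv g) = g.
Proof.
  destruct g as [e k]. dsum_simpl. op_simpl. rewrite !(adjoint_isometry_cancel _ _ V HV).
  f_equal; vec_eq.
Qed.

Lemma dilation_inl (x : K) : dilation ((x, hzero) : dsumH K E) = ((V x, hzero) : dsumH E K).
Proof. dsum_simpl. op_simpl. f_equal; vec_eq. Qed.

End Dilation.

Definition reflection (K E : Hilbert) : BL (dsumH K E) (dsumH K E) :=
  diag_op (id_op K) (opp_op E).

Lemma reflection_involutive (K E : Hilbert) g : reflection K E (reflection K E g) = g.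
Proof. destruct g as [k e]. dsum_simpl. op_simpl. f_equal; vec_eq. Qed.

Lemma reflection_isometry (K E : Hilbert) : isometry (reflection K E).
Proof. intros [k e] [k' e']. dsum_simpl. inner_simpl. apply Cplx_eq; simpl; ring. Qed.

Lemma reflection_inl (K E : Hilbert) (x : K) :
  reflection K E ((x, hzero) : dsumH K E) = ((x, hzero) : dsumH K E).
Proof. dsum_simpl. op_simpl. f_equal; vec_eq. Qed.

Section Conjugation.
Variables (K E : Hilbert) (W : BL K E) (Wi : BL E K).
Hypothesis HW : isometry W.
Hypothesis HWi : forall g, W (Wi g) = g.

(* With Wi a right inverse of the isometry W, Wi is W*, so this is W* X W. *)
Definition conj_tuple {m} (X : tuple m E) : tuple m K := fun l => comp_op Wi (comp_op (X l) W).

Lemma unitary_of_right_inv : unitary W.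
Proof. split; [exact HW | intros y; exists (Wi y); auto]. Qed.

Lemma compress_conj {m} (X : tuple m E) : compress W X (conj_tuple X).
Proof. intros l k k'. simpl. rewrite <- (HW (Wi _) k'), HWi. reflexivity. Qed.

Lemma free_set_conj {m} (C : graded m) : free_set C -> forall X, C E X -> C K (conj_tuple X).
Proof. intros [HU _] X HX. exact (HU E K W unitary_of_right_inv X _ HX (compress_conj X)). Qed.

Lemma free_function_conj {k} (D : graded k) F : free_function D F ->
  forall X, D E X -> compress_op W (F E X) (F K (conj_tuple X)).
Proof. intros [FU _] X HX. exact (FU E K W unitary_of_right_inv X _ HX (compress_conj X)). Qed.

End Conjugation.

Definition diag_tuple {m} {E K : Hilbert} (A : tuple m E) (B : tuple m K) : tuple m (dsumH E K) :=
  fun l => diag_op (A l) (B l).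

Lemma dsum_tuple_diag {m} {E K : Hilbert} (A : tuple m E) (B : tuple m K) :
  dsum_tuple (inl_op E K) (inr_op E K) A B (diag_tuple A B).
Proof. intros l; apply dsum_op_diag. Qed.

Lemma free_set_diag {m} (C : graded m) : free_set C ->
  forall (E K : Hilbert) A B, C E A -> C K B -> C (dsumH E K) (diag_tuple A B).
Proof.
  intros [_ Hds] E K A B HA HB.
  exact (Hds _ _ _ _ _ (is_dsum_pair E K) A B _ HA HB (dsum_tuple_diag A B)).
Qed.

Lemma hinner_scal_real {E : Hilbert} (r s : R) (x y : E) :
  hinner (hscal (RtoC r) x) (hscal (RtoC s) y) = Cmul (RtoC (r * s)) (hinner x y).
Proof. inner_simpl. apply Cplx_eq; simpl; ring. Qed.

Lemma matrix_convex_convex {m} (C : graded m) : matrix_convex C ->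
  forall (E : Hilbert) (A B : tuple m E) (lam : R), 0 <= lam <= 1 -> C E A -> C E B ->
  forall T : tuple m E,
  (forall l x, T l x = hadd (hscal (RtoC (1 - lam)) (A l x)) (hscal (RtoC lam) (B l x))) ->
  C E T.
Proof.
  intros [Hfree Hiso] E A B lam Hlam HA HB T HT.
  set (a := sqrt (1 - lam)). set (b := sqrt lam).
  assert (Ha : a * a = 1 - lam) by (apply sqrt_sqrt; lra).
  assert (Hb : b * b = lam) by (apply sqrt_sqrt; lra).
  clearbody a b.
  assert (Hsplit : isometry (split_op E a b)).
  { intros x y; dsum_simpl. rewrite !hinner_scal_real, Ha, Hb. apply Cplx_eq; simpl; ring. }
  apply (Hiso _ E _ Hsplit _ T (free_set_diag C Hfree E E A B HA HB)).
  intros l k k'. rewrite HT. dsum_simpl. op_simpl. rewrite !hadd0, (haddC _ hzero), hadd0.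
  rewrite !hinner_scal_real, Ha, Hb, hinnerDl, !hinnerZl. reflexivity.
Qed.

Section Pinching.
Variables (m : nat) (K E : Hilbert) (V : BL K E).
Hypothesis HV : isometry V.
Variables (X : tuple m E) (T : tuple m K).

Definition dilated : tuple m (dsumH K E) :=
  conj_tuple _ _ (dilation K E V HV) (dilation_inv K E V HV) (diag_tuple X T).

Definition reflected : tuple m (dsumH K E) :=
  conj_tuple _ _ (reflection K E) (reflection K E) dilated.

(* Averaging with the conjugate by 1 ⊕ (-1) kills the off-diagonal blocks. *)
Definition pinching : tuple m (dsumH K E) :=
  fun l => lincomb_op (1 - / 2) (dilated l) (/ 2) (reflected l).

Definition pinching_compl : tuple m E :=
  fun l => comp_op (snd_op K E) (comp_op (pinching l) (inr_op K E)).

Hypothesis HT : compress V X T.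

Lemma pinching_inl l (x : K) :
  pinching l ((x, hzero) : dsumH K E) = ((T l x, hzero) : dsumH K E).
Proof.
  unfold pinching, reflected, dilated. dsum_simpl. op_simpl. f_equal; [|vec_eq].
  apply hinner_ext; intro z. rewrite (HT l x z). adj_simpl V HV. apply Cplx_eq; simpl; field.
Qed.

Lemma pinching_inr_fst l (e : E) : fst (pinching l ((hzero, e) : dsumH K E)) = hzero.
Proof. unfold pinching, reflected, dilated. dsum_simpl. op_simpl. vec_eq. Qed.

Lemma pinching_inr l (e : E) :
  pinching l (inr_op K E e) = inr_op K E (pinching_compl l e).
Proof.
  change (inr_op K E e) with ((hzero, e) : dsumH K E).
  rewrite (surjective_pairing (pinching l ((hzero, e) : dsumH K E))), pinching_inr_fst.
  reflexivity.
Qed.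

Lemma pinching_dsum : dsum_tuple (inl_op K E) (inr_op K E) T pinching_compl pinching.
Proof.
  intros l x e. rewrite bapp_add, pinching_inr.
  change (inl_op K E x) with ((x, hzero) : dsumH K E). rewrite pinching_inl. reflexivity.
Qed.

Section InD.
Variable D : graded m.
Hypothesis HmcD : matrix_convex D.
Hypotheses (HXD : D E X) (HTD : D K T).

Lemma dilated_in_D : D (dsumH K E) dilated.
Proof.
  destruct HmcD as [Hfree _].
  apply (free_set_conj _ _ _ _ (dilation_isometry K E V HV) (dilation_right_inv K E V HV) D Hfree).
  exact (free_set_diag D Hfree E K X T HXD HTD).
Qed.

Lemma reflected_in_D : D (dsumH K E) reflected.
Proof.
  destruct HmcD as [Hfree _].
  apply (free_set_conj _ _ _ _ (reflection_isometry K E) (reflection_involutive K E) D Hfree).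
  exact dilated_in_D.
Qed.

Lemma pinching_in_D : D (dsumH K E) pinching.
Proof.
  apply (matrix_convex_convex D HmcD _ dilated reflected (/ 2)); try reflexivity.
  - lra.
  - exact dilated_in_D.
  - exact reflected_in_D.
Qed.

Lemma pinching_compl_in_D : closed_reducing D -> D E pinching_compl.
Proof.
  intros Hred. destruct (is_dsum_pair K E) as (_ & Hinr & _).
  apply (Hred _ E (inr_op K E) Hinr pinching pinching_in_D).
  - intros l e. exists (pinching_compl l e). apply pinching_inr.
  - intros l [a b] Hperp e.
    assert (Hb : b = hzero).
    { specialize (Hperp b). dsum_simpl. apply hinner_def.
      simpl in Hperp. unfold dsum_inner in Hperp; simpl in Hperp.
      rewrite hinner_0r in Hperp. rewrite <- Hperp. apply Cplx_eq; simpl; ring. }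
    subst b. rewrite pinching_inl. dsum_simpl. rewrite hinner_0r, hinner_0l.
    apply Cplx_eq; simpl; ring.
  - intros l e. symmetry. apply pinching_inr.
Qed.

End InD.
End Pinching.

Section Hypograph.
Variables (k : nat) (D : graded k) (F : forall E : Hilbert, tuple k E -> BL E E).
Hypotheses (HmcD : matrix_convex D) (HFF : free_function D F).

Lemma concave_compress_le : closed_reducing D -> real_operator_concave D F ->
  forall (E K : Hilbert) (V : BL K E) (HV : isometry V) X T, D E X -> compress V X T ->
  forall x, re (hinner (F E X (V x)) (V x)) <= re (hinner (F K T x) x).
Proof.
  intros Hred Hconc E K V HV X T HX HT x.
  pose proof (proj2 HmcD E K V HV X T HX HT) as HTD.
  pose proof (pinching_compl_in_D k K E V HV X T HT D HmcD HX HTD Hred) as HQD.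
  pose proof (proj2 HFF _ _ _ _ _ (is_dsum_pair E K) _ _ _ HX HTD (dsum_tuple_diag X T)) as HFM.
  pose proof (proj2 HFF _ _ _ _ _ (is_dsum_pair K E) _ _ _ HTD HQD
    (pinching_dsum k K E V HV X T HT)) as HFP.
  pose proof (free_function_conj _ _ _ _ (dilation_isometry K E V HV)
    (dilation_right_inv K E V HV) D F HFF _ (free_set_diag D (proj1 HmcD) E K X T HX HTD)) as HFY.
  pose proof (free_function_conj _ _ _ _ (reflection_isometry K E) (reflection_involutive K E)
    D F HFF _ (dilated_in_D k K E V HV X T D HmcD HX HTD)) as HFR.
  set (Y := dilated k K E V HV X T) in *. set (RY := reflected k K E V HV X T) in *.
  assert (Hlam : 0 <= / 2 <= 1) by lra.
  pose proof (Hconc _ Y RY (/ 2) Hlam (dilated_in_D k K E V HV X T D HmcD HX HTD)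
    (reflected_in_D k K E V HV X T D HmcD HX HTD) (pinching k K E V HV X T) (fun l x => eq_refl)
    (lincomb_op (1 - / 2) (F _ Y) (/ 2) (F _ RY)) (fun x => eq_refl) (x, hzero)) as Hle.
  change (re (hinner (hadd (hscal (RtoC (1 - / 2)) (F _ Y ((x, hzero) : dsumH K E)))
    (hscal (RtoC (/ 2)) (F _ RY ((x, hzero) : dsumH K E)))) ((x, hzero) : dsumH K E))
    <= re (hinner (F _ (pinching k K E V HV X T) ((x, hzero) : dsumH K E)) (x, hzero))) in Hle.
  rewrite hinnerDl, !hinnerZl, HFR, reflection_inl, HFY, dilation_inl,
    (dsum_op_inl_inner _ _ _ HFM), (dsum_op_inl_inner _ _ _ HFP) in Hle.
  simpl in Hle. lra.
Qed.

Lemma hypo_Re_dsum : forall (E K G : Hilbert) (i : BL E G) (j : BL K G), is_dsum i j ->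
  forall X Y T, hypo_Re D F E X -> hypo_Re D F K Y -> dsum_tuple i j X Y T -> hypo_Re D F G T.
Proof.
  intros E K G i j Hij X Y T [HXD HXle] [HYD HYle] HT.
  assert (HTD : D G (fun l => T (Fin.FS l))).
  { apply (proj2 (proj1 HmcD) E K G i j Hij (fun l => X (Fin.FS l)) (fun l => Y (Fin.FS l)));
      auto. intros l; apply HT. }
  split; [exact HTD|]. intros g.
  pose proof (proj2 HFF E K G i j Hij _ _ _ HXD HYD (fun l => HT (Fin.FS l))) as HF.
  destruct (proj2 (proj2 (proj2 Hij)) g) as (e & k0 & ->).
  rewrite (HT Fin.F1 e k0), HF, !(hinner_is_dsum i j Hij); simpl.
  specialize (HXle e). specialize (HYle k0). lra.
Qed.

Lemma hypo_Re_compress : closed_reducing D -> real_operator_concave D F ->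
  forall (E K : Hilbert) (V : BL K E), isometry V ->
  forall X T, hypo_Re D F E X -> compress V X T -> hypo_Re D F K T.
Proof.
  intros Hred Hconc E K V HV X T [HXD HXle] HT.
  assert (HT' : compress V (fun l => X (Fin.FS l)) (fun l => T (Fin.FS l))) by (intros l; apply HT).
  split; [exact (proj2 HmcD E K V HV _ _ HXD HT')|]. intros x.
  rewrite (HT Fin.F1 x x).
  eapply Rle_trans; [apply HXle | exact (concave_compress_le Hred Hconc E K V HV _ _ HXD HT' x)].
Qed.

End Hypograph.

Definition tcons {m} {E : Hilbert} (a : BL E E) (t : tuple m E) : tuple (S m) E :=
  fun i => Fin.caseS' i (fun _ => BL E E) a t.

Lemma concave_of_hypo_Re_convex {k} (D : graded k) (F : forall E : Hilbert, tuple k E -> BL E E) :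
  matrix_convex (hypo_Re D F) -> real_operator_concave D F.
Proof.
  intros Hhyp E A B lam Hlam HA HB T HT S HS.
  assert (Hin : hypo_Re D F E (tcons S T)).
  { apply (matrix_convex_convex _ Hhyp E (tcons (F E A) A) (tcons (F E B) B) lam Hlam).
    - split; [exact HA | intros x; apply Rle_refl].
    - split; [exact HB | intros x; apply Rle_refl].
    - intros i x. apply (Fin.caseS' i (fun i => tcons S T i x =
        hadd (hscal (RtoC (1 - lam)) (tcons (F E A) A i x))
             (hscal (RtoC lam) (tcons (F E B) B i x))));
        simpl; auto. }
  exact (proj2 Hin).
Qed.

Theorem mainTheorem6 (k : nat) (D : graded k)
  (F : forall E : Hilbert, tuple k E -> BL E E) :
  matrix_convex D -> closed_reducing D -> free_function D F ->
  (matrix_convex (hypo_Re D F) <-> real_operator_concave D F).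
Proof.
  intros HmcD Hred HFF. split; [apply concave_of_hypo_Re_convex|]. intros Hconc.
  pose proof (hypo_Re_compress k D F HmcD HFF Hred Hconc) as Hcompress.
  split; [split|].
  - intros E K U [HU _]. exact (Hcompress E K U HU).
  - exact (hypo_Re_dsum k D F HmcD HFF).
  - exact Hcompress.
Qed.
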